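(* Let $R$ be a $\mathbb{C}$-algebra which is a noetherian UFD, and for $a,b\in R$ put $A_{a,b}:=R[U,V]/(aU-bV-1)$. Let $r,s,r',s'\in R$ and suppose that each of the pairs $(a,b)=(r,s)$ and $(a,b)=(r',s')$ satisfies: the ideal $(a,b)$ has height $2$; $a,b$ share no common non-unit factor; $A_{a,b}$ is a UFD; $A_{a,b}^*=R^*$; $R$ is rigid and $ML(A_{a,b})=R$; and the restriction map $\operatorname{Aut}_{\mathbb{C}}(A_{a,b})\to\operatorname{Aut}_{\mathbb{C}}(R)$, $\sigma\mapsto\sigma|_R$ (well defined since such $\sigma$ satisfy $\sigma(R)=R$), is surjective. If $A_{r,s}\cong A_{r',s'}$ as $\mathbb{C}$-algebras, then there exists $\varphi\in\operatorname{Aut}_{\mathbb{C}}(R)$ such that $\varphi(r)R+\varphi(s)R=r'R+s'R$.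
   Context: A derivation $D$ of a ring $B$ is locally nilpotent if for every $b\in B$ there is $n$ with $D^n(b)=0$; $\operatorname{LND}(B)$ denotes the set of locally nilpotent $\mathbb{C}$-derivations of the $\mathbb{C}$-algebra $B$. The Makar-Limanov invariant $ML(B)$ is the intersection of the kernels of all $D\in\operatorname{LND}(B)$. $B$ is rigid if $\operatorname{LND}(B)=\{0\}$. $B^*$ denotes the unit group. *)

From mathcomp Require Import all_boot all_algebra.
From mathcomp Require Import fingroup perm complex Rstruct.
Set Implicit Arguments. Unset Strict Implicit. Unset Printing Implicit Defensive.
Import GRing.Theory.
Local Open Scope ring_scope.

Definition CC : fieldType := complex Rdefinitions.R.

Section RingNotions.
Variable A : comAlgType CC.

Definition isunit (x : A) : Prop := exists y : A, x * y = 1.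
Definition divides (d x : A) : Prop := exists y : A, x = d * y.
Definition associated (x y : A) : Prop := exists w : A, isunit w /\ y = w * x.
Definition is_domain : Prop :=
  (1 : A) != 0 /\ forall x y : A, x * y = 0 -> x = 0 \/ y = 0.
Definition irreducible_elt (p : A) : Prop :=
  p != 0 /\ ~ isunit p /\ forall x y : A, p = x * y -> isunit x \/ isunit y.

Definition all_irr (s : seq A) : Prop :=
  forall i, (i < size s)%N -> irreducible_elt (nth 0 s i).

Definition is_UFD : Prop :=
  is_domain /\
  (forall x : A, x != 0 -> ~ isunit x ->
     exists s : seq A, all_irr s /\ x = \prod_(p <- s) p) /\
  (forall s t : seq A,
     all_irr s -> all_irr t ->
     \prod_(p <- s) p = \prod_(p <- t) p ->
     size s = size t /\
     exists sigma : 'S_(size s), forall i : 'I_(size s),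
       associated (nth 0 s i) (nth 0 t (sigma i))).

Definition is_ideal (I : A -> Prop) : Prop :=
  I 0 /\ (forall x y, I x -> I y -> I (x + y)) /\ (forall x y, I y -> I (x * y)).
Definition is_prime_ideal (P : A -> Prop) : Prop :=
  is_ideal P /\ ~ P 1 /\ forall x y, P (x * y) -> P x \/ P y.
Definition ideal_gen2 (a b : A) (x : A) : Prop := exists y z : A, x = a * y + b * z.

Definition is_noetherian : Prop :=
  forall I : nat -> A -> Prop, (forall n, is_ideal (I n)) ->
    (forall n x, I n x -> I n.+1 x) ->
    exists N, forall n x, (N <= n)%N -> I n x -> I N x.

Definition prime_chain_to (n : nat) (Q : A -> Prop) : Prop :=
  exists P : nat -> A -> Prop,
    (forall i, (i <= n)%N -> is_prime_ideal (P i)) /\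
    (forall i, (i < n)%N -> (forall x, P i x -> P i.+1 x) /\ exists x, P i.+1 x /\ ~ P i x) /\
    (forall x, P n x <-> Q x).

(* Krull height of an ideal I is min over primes P containing I of
   ht P = sup of lengths of prime chains ending at P.
   has_height I 2  <->  ht I = 2 (for I with a prime above it). *)
Definition has_height (I : A -> Prop) (h : nat) : Prop :=
  (forall P, is_prime_ideal P -> (forall x, I x -> P x) -> prime_chain_to h P) /\
  (exists P, is_prime_ideal P /\ (forall x, I x -> P x) /\ ~ prime_chain_to h.+1 P).

Definition no_common_nonunit_factor (a b : A) : Prop :=
  forall d : A, divides d a -> divides d b -> isunit d.

Definition Clinear (f : A -> A) : Prop :=
  (forall x y, f (x + y) = f x + f y) /\ (forall (c : CC) x, f (c *: x) = c *: f x).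
Definition is_Cderivation (D : A -> A) : Prop :=
  Clinear D /\ forall x y, D (x * y) = x * D y + y * D x.
Definition locally_nilpotent (D : A -> A) : Prop :=
  forall b : A, exists n : nat, iter n D b = 0.
Definition is_LND (D : A -> A) : Prop := is_Cderivation D /\ locally_nilpotent D.
Definition ML (x : A) : Prop := forall D, is_LND D -> D x = 0.
Definition rigid : Prop := forall D, is_LND D -> forall x, D x = 0.

End RingNotions.

Definition is_Calg_hom (A B : comAlgType CC) (f : A -> B) : Prop :=
  (forall x y, f (x + y) = f x + f y) /\ (forall x y, f (x * y) = f x * f y) /\
  f 1 = 1 /\ (forall (c : CC) x, f (c *: x) = c *: f x).
Definition is_Calg_iso (A B : comAlgType CC) (f : A -> B) : Prop :=
  is_Calg_hom f /\ bijective f.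
Definition is_Calg_aut (A : comAlgType CC) (f : A -> A) : Prop := is_Calg_iso f.

(* ---------- the ring A_{a,b} = R[U,V]/(aU - bV - 1) ----------
   R[U,V] is {poly {poly R}}: outer variable U, inner variable V. *)
Definition defpoly (R : comAlgType CC) (a b : R) : {poly {poly R}} :=
  (a%:P)%:P * 'X - (b%:P * 'X)%:P - 1.

Definition eval2 (R A : comAlgType CC) (iota : R -> A) (u v : A)
  (p : {poly {poly R}}) : A :=
  (map_poly (fun q : {poly R} => (map_poly iota q).[v]) p).[u].

(* (A, iota, u, v) is a presentation of A_{a,b}: iota is a C-algebra map
   and the induced R-algebra map R[U,V] -> A, U |-> u, V |-> v, is
   surjective with kernel the principal ideal (aU - bV - 1). *)
Definition presents (R : comAlgType CC) (a b : R)
  (A : comAlgType CC) (iota : R -> A) (u v : A) : Prop :=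
  is_Calg_hom iota /\
  (forall x : A, exists p, eval2 iota u v p = x) /\
  (forall p, eval2 iota u v p = 0 <-> exists q, p = q * defpoly a b).

Definition good_pair (R : comAlgType CC) (a b : R)
  (A : comAlgType CC) (iota : R -> A) : Prop :=
  has_height (ideal_gen2 a b) 2 /\
  no_common_nonunit_factor a b /\
  is_UFD A /\
  (forall y : A, isunit y <-> exists x : R, isunit x /\ y = iota x) /\
  rigid R /\
  (forall y : A, ML y <-> exists x : R, y = iota x) /\
  (forall tau : R -> R, is_Calg_aut tau ->
     exists sigma : A -> A, is_Calg_aut sigma /\ forall x, sigma (iota x) = iota (tau x)).

From HB Require Import structures.
From mathcomp Require Import all_boot all_algebra ring.
Set Implicit Arguments. Unset Strict Implicit. Unset Printing Implicit Defensive.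
Import GRing.Theory.
Local Open Scope ring_scope.

(* The derivation b d/dU + a d/dV of R[U,V] kills aU - bV - 1, so it induces an
   R-derivation D of A = A_{a,b} with D U = b and D V = a; differentiating
   aU - bV = 1 shows that every R-derivation of A is a multiple of D.  Because
   ML(A) = R, a C-isomorphism A -> A' maps R onto R; after composing with a lift
   of the inverse automorphism of R it becomes R-linear, so it conjugates D to a
   multiple of D' by a unit of A, i.e. of R.  As ker D = R, an element D w of R
   lies in (a,b); applied to a' = D'(V') and b' = D'(U') this gives
   (a',b') <= (a,b), and symmetrically. *)

Section CalgHom.
Variables (A B : comAlgType CC) (f : A -> B).
Hypothesis hf : is_Calg_hom f.

Lemma Calg_hom_nmod : nmod_morphism f.
Proof.
case: hf => fD _; split; last exact: fD.
by apply: (addrI (f 0)); rewrite -fD !addr0.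
Qed.

Lemma Calg_hom_monoid : monoid_morphism f.
Proof. by case: hf => _ [fM [f1 _]]. Qed.

Definition Calg_rmorph : {rmorphism A -> B} :=
  HB.pack f (GRing.isNmodMorphism.Build A B f Calg_hom_nmod)
    (GRing.isMonoidMorphism.Build A B f Calg_hom_monoid).

Lemma Calg_hom0 : f 0 = 0. Proof. exact: (rmorph0 Calg_rmorph). Qed.
Lemma Calg_hom1 : f 1 = 1. Proof. exact: (rmorph1 Calg_rmorph). Qed.
Lemma Calg_homD x y : f (x + y) = f x + f y. Proof. exact: (rmorphD Calg_rmorph). Qed.
Lemma Calg_homN x : f (- x) = - f x. Proof. exact: (rmorphN Calg_rmorph). Qed.
Lemma Calg_homB x y : f (x - y) = f x - f y. Proof. exact: (rmorphB Calg_rmorph). Qed.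
Lemma Calg_homM x y : f (x * y) = f x * f y. Proof. exact: (rmorphM Calg_rmorph). Qed.
Lemma Calg_homZ c x : f (c *: x) = c *: f x. Proof. exact: hf.2.2.2. Qed.

End CalgHom.

Lemma Calg_hom_id (A : comAlgType CC) : is_Calg_hom (@id A).
Proof. by []. Qed.

Lemma Calg_hom_comp (A B C : comAlgType CC) (f : A -> B) (g : B -> C) :
  is_Calg_hom f -> is_Calg_hom g -> is_Calg_hom (g \o f).
Proof.
move=> hf hg; split; [|split; [|split]] => /=.
- by move=> x y; rewrite !Calg_homD.
- by move=> x y; rewrite !Calg_homM.
- by rewrite !Calg_hom1.
- by move=> c x; rewrite !Calg_homZ.
Qed.

Lemma Calg_hom_inv (A B : comAlgType CC) (f : A -> B) (g : B -> A) :
  is_Calg_hom f -> cancel f g -> cancel g f -> is_Calg_hom g.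
Proof.
move=> hf fK gK; split; [|split; [|split]].
- by move=> x y; apply: (can_inj fK); rewrite gK Calg_homD // !gK.
- by move=> x y; apply: (can_inj fK); rewrite gK Calg_homM // !gK.
- by apply: (can_inj fK); rewrite gK Calg_hom1.
- by move=> c x; apply: (can_inj fK); rewrite gK Calg_homZ // !gK.
Qed.

Lemma ML_Calg_iso (A B : comAlgType CC) (f : A -> B) (g : B -> A) :
  is_Calg_hom f -> cancel f g -> cancel g f -> forall y, ML y -> ML (f y).
Proof.
move=> hf fK gK y MLy D' [[[D'D D'Z] D'M] D'nil].
have hg := Calg_hom_inv hf fK gK.
pose D := g \o D' \o f.
have D_LND : is_LND D.
  split; [split; [split|]|].
  - by move=> x z; rewrite /D /= Calg_homD // D'D Calg_homD.
  - by move=> c x; rewrite /D /= Calg_homZ // D'Z Calg_homZ.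
  - by move=> x z; rewrite /D /= (Calg_homM hf) D'M (Calg_homD hg) !(Calg_homM hg) !fK.
  - move=> x; have [n D'n] := D'nil (f x); exists n.
    have -> : iter n D x = g (iter n D' (f x)).
      by elim: n {D'n} => [|n IHn] /=; [rewrite fK | rewrite IHn /D /= gK].
    by rewrite D'n Calg_hom0.
by have := MLy D D_LND; rewrite /D /= => /(congr1 f); rewrite gK => ->; apply: Calg_hom0.
Qed.

Lemma ideal_gen2_trans (R : comAlgType CC) (a b a' b' x : R) :
  ideal_gen2 a b a' -> ideal_gen2 a b b' -> ideal_gen2 a' b' x -> ideal_gen2 a b x.
Proof.
move=> [y1 [z1 ->]] [y2 [z2 ->]] [y [z ->]].
by exists (y1 * y + y2 * z), (z1 * y + z2 * z); ring.
Qed.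

Lemma ideal_gen2_unit_mull (R : comAlgType CC) (a b c x : R) :
  isunit c -> ideal_gen2 a b (c * x) -> ideal_gen2 a b x.
Proof.
move=> [d cd] [y [z e]]; exists (d * y), (d * z).
by rewrite -[x]mul1r -cd mulrAC e; ring.
Qed.

Lemma height2_coprime_neq0 (R : comAlgType CC) (a b : R) :
  has_height (ideal_gen2 a b) 2 -> no_common_nonunit_factor a b -> a != 0.
Proof.
move=> [_ [P [[_ [notP1 _]] [P_sup _]]]] coprime; apply/negP => /eqP a0.
have [y by1] : isunit b.
  by apply: coprime; [exists 0; rewrite a0 mulr0 | exists 1; rewrite mulr1].
by apply: notP1; apply: P_sup; exists 0, y; rewrite by1 mulr0 add0r.
Qed.

Definition derivV (R : comAlgType CC) (p : {poly {poly R}}) : {poly {poly R}} :=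
  map_poly deriv p.

Section DerivV.
Variable R : comAlgType CC.
Implicit Types p q : {poly {poly R}}.

Lemma derivVD p q : derivV (p + q) = derivV p + derivV q.
Proof. exact: raddfD. Qed.

Lemma derivVB p q : derivV (p - q) = derivV p - derivV q.
Proof. exact: raddfB. Qed.

Lemma derivV0 : derivV (0 : {poly {poly R}}) = 0.
Proof. exact: raddf0. Qed.

Lemma derivVM p q : derivV (p * q) = derivV p * q + p * derivV q.
Proof.
apply/polyP => i; rewrite /derivV coefD !coef_map /= !coefM raddf_sum -big_split /=.
by apply: eq_bigr => j _; rewrite derivM !coef_map.
Qed.

Lemma derivVX : derivV ('X : {poly {poly R}}) = 0.
Proof.
apply/polyP => i; rewrite /derivV coef_map coefX coef0 /=.
by case: (i == 1)%N; rewrite ?raddf0 // -polyC1 derivC.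
Qed.

Lemma derivVC (c : {poly R}) : derivV c%:P = (deriv c)%:P.
Proof. by rewrite /derivV map_polyC. Qed.

Lemma derivVMXaddC q c : derivV (q * 'X + c%:P) = derivV q * 'X + (deriv c)%:P.
Proof. by rewrite derivVD derivVM derivVX mulr0 addr0 derivVC. Qed.

End DerivV.

Definition is_Rder (R A : comAlgType CC) (iota : R -> A) (F : A -> A) : Prop :=
  [/\ forall x y, F (x + y) = F x + F y,
      forall x y, F (x * y) = x * F y + y * F x
    & forall x, F (iota x) = 0].

Section Rderivation.
Variables (R A : comAlgType CC) (iota : R -> A) (F : A -> A).
Hypothesis hF : is_Rder iota F.

Lemma Rder0 : F 0 = 0.
Proof. by case: hF => FD _ _; apply: (addrI (F 0)); rewrite -FD !addr0. Qed.

Lemma RderN x : F (- x) = - F x.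
Proof. by case: hF => FD _ _; apply: (addrI (F x)); rewrite -FD !subrr Rder0. Qed.

End Rderivation.

Lemma Rder_conj (R A A' : comAlgType CC) (iota : R -> A) (iota' : R -> A')
    (G : A -> A') (H : A' -> A) (F : A' -> A') :
  is_Calg_hom G -> cancel G H -> cancel H G -> (forall x, G (iota x) = iota' x) ->
  is_Rder iota' F -> is_Rder iota (H \o F \o G).
Proof.
move=> hG GK HK G_iota [FD FM Fiota]; have hH := Calg_hom_inv hG GK HK.
split => [x y|x y|x] /=.
- by rewrite (Calg_homD hG) FD (Calg_homD hH).
- by rewrite (Calg_homM hG) FM (Calg_homD hH) !(Calg_homM hH) !GK.
- by rewrite G_iota Fiota (Calg_hom0 hH).
Qed.

Section Presentation.
Variables (R A : comAlgType CC) (iota : R -> A) (u v : A) (a b : R).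
Hypothesis hP : presents a b iota u v.

Let iota_rmorph := Calg_rmorph hP.1.

Definition evalV : {poly R} -> A := horner_eval v \o map_poly iota_rmorph.
HB.instance Definition _ :=
  GRing.RMorphism.copy evalV (horner_eval v \o map_poly iota_rmorph).
Definition evalUV : {poly {poly R}} -> A := horner_eval u \o map_poly evalV.
HB.instance Definition _ :=
  GRing.RMorphism.copy evalUV (horner_eval u \o map_poly evalV).

Lemma evalV_X : evalV 'X = v.
Proof. by rewrite /evalV /comp horner_evalE map_polyX hornerX. Qed.

Lemma evalV_C x : evalV x%:P = iota x.
Proof. by rewrite /evalV /comp horner_evalE map_polyC hornerC. Qed.

Lemma evalUV_X : evalUV 'X = u.
Proof. by rewrite /evalUV /comp horner_evalE map_polyX hornerX. Qed.

Lemma evalUV_C c : evalUV c%:P = evalV c.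
Proof. by rewrite /evalUV /comp horner_evalE map_polyC hornerC. Qed.

Lemma evalUV_surj x : exists p, evalUV p == x.
Proof. by have [p <-] := hP.2.1 x; exists p. Qed.

Lemma evalUV_eq0 p : evalUV p = 0 <-> exists q, p = q * defpoly a b.
Proof. exact: hP.2.2 p. Qed.

Lemma evalUV_defpoly : evalUV (defpoly a b) = 0.
Proof. by apply/evalUV_eq0; exists 1; rewrite mul1r. Qed.

Lemma presents_rel : iota a * u - iota b * v = 1.
Proof.
move: evalUV_defpoly; rewrite /defpoly !rmorphB !rmorphM /= rmorph1.
by rewrite evalUV_X !evalUV_C evalV_X !evalV_C => /eqP; rewrite subr_eq0 => /eqP.
Qed.

Lemma Rder_evalUV F : is_Rder iota F -> forall p,
  F (evalUV p) = evalUV (deriv p) * F u + evalUV (derivV p) * F v.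
Proof.
move=> hF; have [FD FM Fiota] := hF.
have F_evalV c : F (evalV c) = evalV (deriv c) * F v.
  elim/poly_ind: c => [|c x IHc]; first by rewrite !raddf0 (Rder0 hF) mul0r.
  by rewrite derivMXaddC !rmorphD !rmorphM /= evalV_X !evalV_C FD FM Fiota IHc; ring.
elim/poly_ind => [|q c IHq]; first by rewrite derivV0 !raddf0 (Rder0 hF); ring.
rewrite derivMXaddC derivVMXaddC !rmorphD !rmorphM /= evalUV_X !evalUV_C.
by rewrite FD FM IHq F_evalV; ring.
Qed.

Lemma presents_inj : is_domain R -> a != 0 -> injective iota.
Proof.
move=> [_ R_dom] a_neq0.
suff iota_eq0 z : iota z = 0 -> z = 0.
  move=> x y e; apply/eqP; rewrite -subr_eq0; apply/eqP/iota_eq0.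
  by rewrite (Calg_homB hP.1) e subrr.
rewrite -evalV_C -evalUV_C => /evalUV_eq0 [q e].
have [q0|q_neq0] := eqVneq q 0.
  by move: e; rewrite q0 mul0r => /eqP; rewrite !polyC_eq0 => /eqP.
(* The product q (aU - bV - 1) has top U-coefficient a q_n <> 0, yet is constant. *)
set n := (size q).-1; have size_q : size q = n.+1 by rewrite prednK // size_poly_gt0.
have : (q * defpoly a b)`_n.+1 = 0 by rewrite -e coefC.
rewrite /defpoly !mulrBr !coefB mulrA coefMX coefMC mulr1 coefMC.
rewrite [q`_n.+1]nth_default ?size_q // mul0r !subr0 => qn_a.
have qn0 : q`_n = 0.
  apply/polyP => i; have := congr1 (fun p : {poly R} => p`_i) qn_a.
  by rewrite coefMC coef0 => /R_dom [// | /eqP]; rewrite (negbTE a_neq0).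
by move: q_neq0; rewrite -lead_coef_eq0 lead_coefE size_q qn0 eqxx.
Qed.

Definition Dpoly p := evalUV (deriv p) * iota b + evalUV (derivV p) * iota a.

Lemma DpolyB p q : Dpoly (p - q) = Dpoly p - Dpoly q.
Proof. by rewrite /Dpoly derivB derivVB !rmorphB; ring. Qed.

Lemma DpolyM p q : Dpoly (p * q) = evalUV p * Dpoly q + evalUV q * Dpoly p.
Proof. by rewrite /Dpoly derivM derivVM !rmorphD !rmorphM; ring. Qed.

Lemma Dpoly_ker p : evalUV p = 0 -> Dpoly p = 0.
Proof.
case/evalUV_eq0 => q ->; rewrite DpolyM evalUV_defpoly mul0r addr0.
suff -> : Dpoly (defpoly a b) = 0 by rewrite mulr0.
rewrite /Dpoly /defpoly !derivE !derivVB derivVM derivVX !derivVC !derivE.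
by rewrite !rmorphB !rmorphD !rmorphM /= !raddf0 !rmorph1 evalUV_X !evalUV_C !evalV_C; ring.
Qed.

Definition Dab (x : A) : A := Dpoly (xchoose (evalUV_surj x)).

Lemma Dab_evalUV p : Dab (evalUV p) = Dpoly p.
Proof.
rewrite /Dab; have /eqP := xchooseP (evalUV_surj (evalUV p)).
move: (xchoose _) => p0 e; apply/eqP; rewrite -subr_eq0 -DpolyB.
by apply/eqP/Dpoly_ker; rewrite rmorphB /= e subrr.
Qed.

Lemma Dab_Rder : is_Rder iota Dab.
Proof.
split => [x y|x y|x].
- have [p /eqP <-] := evalUV_surj x; have [q /eqP <-] := evalUV_surj y.
  by rewrite -rmorphD !Dab_evalUV /Dpoly derivD derivVD !rmorphD; ring.
- have [p /eqP <-] := evalUV_surj x; have [q /eqP <-] := evalUV_surj y.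
  by rewrite -rmorphM !Dab_evalUV DpolyM.
- by rewrite -evalV_C -evalUV_C Dab_evalUV /Dpoly derivVC !derivC !raddf0; ring.
Qed.

Lemma Dab_u : Dab u = iota b.
Proof. by rewrite -evalUV_X Dab_evalUV /Dpoly derivX derivVX rmorph1 rmorph0; ring. Qed.

Lemma Dab_v : Dab v = iota a.
Proof.
rewrite -evalV_X -evalUV_C Dab_evalUV /Dpoly derivC derivVC derivX polyC1.
by rewrite rmorph1 rmorph0; ring.
Qed.

(* Differentiating aU - bV = 1 gives a F(U) = b F(V), whence F = (F(V) U - F(U) V) D. *)
Lemma Rder_eq_scale F :
  is_Rder iota F -> forall x, F x = (F v * u - F u * v) * Dab x.
Proof.
move=> hF x; have [FD FM Fiota] := hF; have [p /eqP <-] := evalUV_surj x.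
have Frel : iota a * F u = iota b * F v.
  have := congr1 F presents_rel; rewrite -(Calg_hom1 hP.1) Fiota FD (RderN hF).
  by rewrite !FM !Fiota !mulr0 !addr0 => /eqP; rewrite subr_eq0 => /eqP.
have Fu : F u = (F v * u - F u * v) * iota b.
  rewrite -[LHS]mulr1 -presents_rel.
  by transitivity (iota a * F u * u - iota b * F u * v); [ring | rewrite Frel; ring].
have Fv : F v = (F v * u - F u * v) * iota a.
  rewrite -[LHS]mulr1 -presents_rel.
  by transitivity (iota a * F v * u - iota b * F v * v); [ring | rewrite -Frel; ring].
rewrite (Rder_evalUV hF) Dab_evalUV /Dpoly.
by set c := F v * u - F u * v in Fu Fv *; rewrite Fu Fv; ring.
Qed.

Section MLequalsR.
Hypothesis ML_R : forall y, ML y <-> exists x, y = iota x.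

Lemma Dab_eq0_in_R z : Dab z = 0 -> exists x, z = iota x.
Proof.
move=> Dz; apply/ML_R => F LND_F; have [[[FD _] FM] _] := LND_F.
have ML_iota x : ML (iota x) by apply/ML_R; exists x.
have hF : is_Rder iota F by split=> // x; apply: ML_iota.
by rewrite (Rder_eq_scale hF) Dz mulr0.
Qed.

(* If D w = x then both bw - xU and aw - xV lie in ker D = R. *)
Lemma Dab_in_R_ideal :
  is_domain R -> a != 0 -> forall w x, Dab w = iota x -> ideal_gen2 a b x.
Proof.
move=> R_dom a_neq0 w x Dw; have [DD DM Diota] := Dab_Rder.
have [y ey] : exists y, iota b * w - iota x * u = iota y.
  by apply: Dab_eq0_in_R; rewrite DD (RderN Dab_Rder) !DM !Diota Dw Dab_u; ring.
have [z ez] : exists z, iota a * w - iota x * v = iota z.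
  by apply: Dab_eq0_in_R; rewrite DD (RderN Dab_Rder) !DM !Diota Dw Dab_v; ring.
exists (- y), z; apply: (presents_inj R_dom a_neq0).
rewrite (Calg_homD hP.1) !(Calg_homM hP.1) (Calg_homN hP.1) -ey -ez.
by rewrite -[LHS]mulr1 -presents_rel; ring.
Qed.

End MLequalsR.

End Presentation.

Lemma Calg_hom_descend (R A A' : comAlgType CC) (iota : R -> A) (iota' : R -> A')
    (f : A -> A') (phi : R -> R) :
  is_Calg_hom iota -> is_Calg_hom iota' -> is_Calg_hom f -> injective iota' ->
  (forall x, f (iota x) = iota' (phi x)) -> is_Calg_hom phi.
Proof.
move=> hi hi' hf iota'_inj fE; split; [|split; [|split]].
- by move=> x y; apply: iota'_inj; rewrite -fE !Calg_homD // !fE.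
- by move=> x y; apply: iota'_inj; rewrite -fE !Calg_homM // !fE.
- by apply: iota'_inj; rewrite -fE !Calg_hom1.
- by move=> c x; apply: iota'_inj; rewrite -fE !Calg_homZ // !fE.
Qed.

Lemma Calg_iso_restrict (R A A' : comAlgType CC) (iota : R -> A) (iota' : R -> A')
    (f : A -> A') (g : A' -> A) :
  is_Calg_hom iota -> is_Calg_hom iota' -> injective iota -> injective iota' ->
  (forall y, ML y <-> exists x, y = iota x) -> (forall y, ML y <-> exists x, y = iota' x) ->
  is_Calg_hom f -> cancel f g -> cancel g f ->
  exists phi, is_Calg_aut phi /\ forall x, f (iota x) = iota' (phi x).
Proof.
move=> hi hi' iota_inj iota'_inj ML_A ML_A' hf fK gK.
have hg := Calg_hom_inv hf fK gK.
have f_iota x : exists y, f (iota x) == iota' y.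
  have /ML_A' [y ->] : ML (f (iota x)) by apply: (ML_Calg_iso hf fK gK); apply/ML_A; exists x.
  by exists y.
have g_iota' x : exists y, g (iota' x) == iota y.
  have /ML_A [y ->] : ML (g (iota' x)) by apply: (ML_Calg_iso hg gK fK); apply/ML_A'; exists x.
  by exists y.
pose phi x := xchoose (f_iota x); pose psi x := xchoose (g_iota' x).
have phiE x : f (iota x) = iota' (phi x) by apply/eqP/(xchooseP (f_iota x)).
have psiE x : g (iota' x) = iota (psi x) by apply/eqP/(xchooseP (g_iota' x)).
exists phi; split=> //; split; first exact: Calg_hom_descend phiE.
by exists psi => x; [apply: iota_inj; rewrite -psiE -phiE fK | apply: iota'_inj; rewrite -phiE -psiE gK].
Qed.

(* Composing with a lift of the inverse of the induced automorphism of R. *)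
Lemma Calg_iso_over_R (R A A' : comAlgType CC) (iota : R -> A) (iota' : R -> A') :
  is_Calg_hom iota -> is_Calg_hom iota' -> injective iota -> injective iota' ->
  (forall y, ML y <-> exists x, y = iota x) -> (forall y, ML y <-> exists x, y = iota' x) ->
  (forall tau : R -> R, is_Calg_aut tau ->
     exists sigma : A' -> A', is_Calg_aut sigma /\ forall x, sigma (iota' x) = iota' (tau x)) ->
  (exists f : A -> A', is_Calg_iso f) ->
  exists G : A -> A', is_Calg_iso G /\ forall x, G (iota x) = iota' x.
Proof.
move=> hi hi' iota_inj iota'_inj ML_A ML_A' lift [f [hf [g fK gK]]].
have [phi [[hphi [psi phiK psiK]] phiE]] :=
  Calg_iso_restrict hi hi' iota_inj iota'_inj ML_A ML_A' hf fK gK.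
have hpsi := Calg_hom_inv hphi phiK psiK.
have [sigma [[hsigma sigma_bij] sigmaE]] := lift psi (conj hpsi (Bijective psiK phiK)).
exists (sigma \o f); split; first split.
- exact: Calg_hom_comp.
- by apply: bij_comp => //; exists g.
- by move=> x; rewrite /= phiE sigmaE phiK.
Qed.

Section IsomorphismOverR.
Variables (R A A' : comAlgType CC) (iota : R -> A) (iota' : R -> A').
Variables (u v : A) (u' v' : A') (a b a' b' : R).
Hypotheses (hP : presents a b iota u v) (hP' : presents a' b' iota' u' v').
Hypotheses (R_dom : is_domain R) (a_neq0 : a != 0) (A_dom : is_domain A).
Variables (G : A -> A') (H : A' -> A).
Hypotheses (hG : is_Calg_hom G) (GK : cancel G H) (HK : cancel H G).
Hypothesis G_iota : forall x, G (iota x) = iota' x.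

Lemma inv_iota x : H (iota' x) = iota x.
Proof. by rewrite -G_iota GK. Qed.

Lemma Dab_conj_unit :
  exists2 c, isunit c & forall y, Dab hP (H y) = c * H (Dab hP' y).
Proof.
have hH := Calg_hom_inv hG GK HK.
have [cE E_scale] : exists cE, forall x, H (Dab hP' (G x)) = cE * Dab hP x.
  by eexists; apply: (Rder_eq_scale hP (Rder_conj hG GK HK G_iota (Dab_Rder hP'))).
have [cF F_scale] : exists cF, forall y, G (Dab hP (H y)) = cF * Dab hP' y.
  by eexists; apply: (Rder_eq_scale hP' (Rder_conj hH HK GK inv_iota (Dab_Rder hP))).
have DabH y : Dab hP (H y) = H cF * H (Dab hP' y).
  by rewrite -(Calg_homM hH) -F_scale GK.
exists (H cF) => //; exists cE.
have Dv : Dab hP v = H cF * (cE * Dab hP v) by rewrite -E_scale -DabH GK.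
have : (1 - H cF * cE) * iota a = 0 by rewrite -(Dab_v hP) mulrBl mul1r {1}Dv mulrA subrr.
case/(A_dom.2) => [/eqP|]; first by rewrite subr_eq0 => /eqP <-.
rewrite -(Calg_hom0 hP.1) => /(presents_inj hP R_dom a_neq0) a0.
by move: a_neq0; rewrite a0 eqxx.
Qed.

Lemma ideal_incl_over_R :
  (forall y, isunit y -> exists x, isunit x /\ y = iota x) ->
  (forall y, ML y <-> exists x, y = iota x) ->
  ideal_gen2 a b a' /\ ideal_gen2 a b b'.
Proof.
move=> A_units ML_A; have [c c_unit DabH] := Dab_conj_unit.
have [g [g_unit c_eq]] := A_units c c_unit.
suff in_ideal w t : Dab hP' w = iota' t -> ideal_gen2 a b t.
  by split; [apply: (in_ideal v' _ (Dab_v hP')) | apply: (in_ideal u' _ (Dab_u hP'))].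
move=> Dw; apply: (ideal_gen2_unit_mull g_unit).
apply: (Dab_in_R_ideal (hP := hP) ML_A R_dom a_neq0 (w := H w)).
by rewrite DabH Dw inv_iota c_eq (Calg_homM hP.1).
Qed.

End IsomorphismOverR.

Theorem mainTheorem7 (R : comAlgType CC) (r s r' s' : R)
  (A : comAlgType CC) (iota : R -> A) (u v : A)
  (A' : comAlgType CC) (iota' : R -> A') (u' v' : A') :
  is_noetherian R -> is_UFD R ->
  presents r s iota u v -> presents r' s' iota' u' v' ->
  good_pair r s iota -> good_pair r' s' iota' ->
  (exists f : A -> A', is_Calg_iso f) ->
  exists phi : R -> R, is_Calg_aut phi /\
    forall x : R, ideal_gen2 (phi r) (phi s) x <-> ideal_gen2 r' s' x.
Proof.
move=> _ [R_dom _] hP hP' [ht [coprime [[A_dom _] [units [_ [ML_A _]]]]]]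
  [ht' [coprime' [[A'_dom _] [units' [_ [ML_A' lift']]]]]] iso.
have r_neq0 := height2_coprime_neq0 ht coprime.
have r'_neq0 := height2_coprime_neq0 ht' coprime'.
have [G [[hG [H GK HK]] G_iota]] := Calg_iso_over_R hP.1 hP'.1
  (presents_inj hP R_dom r_neq0) (presents_inj hP' R_dom r'_neq0) ML_A ML_A' lift' iso.
have [r'_in s'_in] := ideal_incl_over_R hP hP' R_dom r_neq0 A_dom hG GK HK G_iota
  (fun y => (units y).1) ML_A.
have [r_in s_in] := ideal_incl_over_R hP' hP R_dom r'_neq0 A'_dom
  (Calg_hom_inv hG GK HK) HK GK (inv_iota GK G_iota) (fun y => (units' y).1) ML_A'.
exists id; split; first by split; [exact: Calg_hom_id | exists id].
by move=> x; split; apply: ideal_gen2_trans.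
Qed.
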